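(* Let $\mathbb{R}^n$ and $\mathbb{R}^m$ be endowed with arbitrary norms (both denoted $\|\cdot\|$) and let $A\in\mathbb{R}^{m\times n}$ have at least two different columns. Then \[ \max_{w\in\mathbb{R}^n\setminus\{0\},\ \langle\mathbf{1},w\rangle=0}\frac{\|Aw\|}{\|w\|}=\max_{u\in\mathrm{conv}(A),\ x\in\Delta_{n-1}\setminus Z(u)}\frac{\|Ax-u\|}{\mathrm{dist}(x,Z(u))}, \] and \[ \frac{\Phi(A)}{\max_{i=1,\dots,n}\|e_i\|}\le\min_{u\in\mathrm{conv}(A),\ x\in\Delta_{n-1}\setminus Z(u)}\frac{2\|Ax-u\|}{\mathrm{dist}(x,Z(u))}. \]
   Context: $\mathbf{1}$ is the all-ones vector and $e_i$ the standard basis vectors of $\mathbb{R}^n$. $\Delta_{n-1}=\{x\in\mathbb{R}^n_+:\sum_ix_i=1\}$; $A$ is identified with the set of its columns; $\mathrm{conv}(A)=\{Ax:x\in\Delta_{n-1}\}$; for $u\in\mathrm{conv}(A)$, $Z(u)=\{z\in\Delta_{n-1}:Az=u\}$ and $\mathrm{dist}(x,Z(u))=\min_{z\in Z(u)}\|x-z\|$ (norm of $\mathbb{R}^n$). The facial distance is $\Phi(A)=\min\{\mathrm{dist}(F,\mathrm{conv}(A\setminus F)):F\text{ a face of }\mathrm{conv}(A),\ \emptyset\ne F\ne\mathrm{conv}(A)\}$, with $A\setminus F$ the columns of $A$ not in $F$ and $\mathrm{dist}(F,G)=\inf_{u\in F,w\in G}\|u-w\|$ (norm of $\mathbb{R}^m$).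 *)

From HB Require Import structures.
From mathcomp Require Import all_boot all_order all_algebra.
From mathcomp Require Import boolp classical_sets reals.
Set Implicit Arguments. Unset Strict Implicit. Unset Printing Implicit Defensive.
Import Order.TTheory GRing.Theory Num.Theory.
Local Open Scope ring_scope.
Local Open Scope classical_set_scope.

Section Defs.
Variable R : realType.

Definition is_norm (k : nat) (N : 'cV[R]_k -> R) : Prop :=
  [/\ forall x, N x = 0 -> x = 0,
      forall (a : R) x, N (a *: x) = `|a| * N x
    & forall x y, N (x + y) <= N x + N y].

Definition is_max (S : set R) (M : R) : Prop :=
  S M /\ forall s, S s -> s <= M.

Definition simplex (n : nat) : set 'cV[R]_n :=
  [set x | (forall i, 0 <= x i 0) /\ \sum_i x i 0 = 1].

Definition convA (m n : nat) (A : 'M[R]_(m, n)) : set 'cV[R]_m :=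
  [set A *m x | x in @simplex n].

Definition Zset (m n : nat) (A : 'M[R]_(m, n)) (u : 'cV[R]_m) : set 'cV[R]_n :=
  [set z | @simplex n z /\ A *m z = u].

Definition dist_pt (k : nat) (N : 'cV[R]_k -> R) (x : 'cV[R]_k)
  (S : set 'cV[R]_k) : R := inf [set N (x - z) | z in S].

Definition dist_set (k : nat) (N : 'cV[R]_k -> R) (F G : set 'cV[R]_k) : R :=
  inf [set N (u - w) | u in F & w in G].

Definition convex_set (k : nat) (C : set 'cV[R]_k) : Prop :=
  forall y z (t : R), C y -> C z -> 0 <= t <= 1 -> C (t *: y + (1 - t) *: z).

Definition is_face (k : nat) (C F : set 'cV[R]_k) : Prop :=
  [/\ F `<=` C, convex_set F &
      forall y z (t : R), C y -> C z -> 0 < t < 1 ->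
        F (t *: y + (1 - t) *: z) -> F y /\ F z].

Definition conv_outside (m n : nat) (A : 'M[R]_(m, n)) (F : set 'cV[R]_m)
  : set 'cV[R]_m :=
  [set A *m x | x in [set x | @simplex n x /\ forall i, F (col i A) -> x i 0 = 0]].

(* facial distance Phi(A) (a min over the finitely many proper nonempty faces) *)
Definition facial_distance (m n : nat) (Nm : 'cV[R]_m -> R) (A : 'M[R]_(m, n)) : R :=
  inf [set dist_set Nm F (conv_outside A F) |
        F in [set F | is_face (convA A) F /\ F !=set0 /\ F <> convA A]].

End Defs.
Arguments simplex {R} n _.

(* Let M be the largest value of |Aw| / |w| over w <> 0 with coordinate sum 0
   (it exists by compactness and is positive since two columns of A differ).
   For z in Z(u) we have Ax - u = A(x - z) with x - z of sum 0, so
   |Ax - u| <= M dist(x, Z(u)); conversely, for a maximiser w and the barycentre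
   c of the simplex, x = c + t w and u = Ac give |Ax - u| = t M |w| while
   dist(x, Z(u)) <= |x - c| = t |w|.  Hence both maxima equal M.

   For the facial bound, pick z in Z(u) nearest to x in the l1 norm and write
   x - z = s (p - q) with p, q in the simplex and s = |x - z|_1 / 2.  If a column
   a_j in the support of p lay in the smallest face G of conv(A) containing Aq,
   shifting mass of z from q towards e_j would stay in Z(u) and decrease
   |x - z|_1.  So Ap lies in the hull of the columns outside G, whence
   Phi(A) <= |Ap - Aq| = |Ax - u| / s, while
   dist(x, Z(u)) <= |x - z| <= 2 s max_i |e_i|. *)

From HB Require Import structures.
From mathcomp Require Import all_boot all_order all_algebra.
From mathcomp Require Import boolp classical_sets reals.
From mathcomp Require Import topology normedtype derive.
From mathcomp Require Import ring lra.
Import Order.TTheory GRing.Theory Num.Theory.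
Import numFieldTopology.Exports numFieldNormedType.Exports.
Local Open Scope ring_scope.
Local Open Scope classical_set_scope.
Set Implicit Arguments. Unset Strict Implicit. Unset Printing Implicit Defensive.

Lemma mulmx_sum_col (R : comPzRingType) m k (B : 'M[R]_(m, k)) (x : 'cV[R]_k) :
  B *m x = \sum_j x j 0 *: col j B.
Proof.
by apply/colP => i /[!(mxE, summxE)]; apply: eq_bigr => j _ /[!mxE]; rewrite mulrC.
Qed.

Section ContinuityLemmas.
Variable R : realType.

Lemma lipschitz_continuous (V W : normedModType R) (f : V -> W) (c : R) :
  (forall x y, `|f x - f y| <= c * `|x - y|) -> continuous f.
Proof.
move=> fc x; apply/(@cvgrPdist_lt _ _ _ (nbhs x)) => e e0.
have c1 : 0 < `|c| + 1 by rewrite ltr_wpDl.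
near=> y; apply: le_lt_trans (fc x y) _.
apply: (@le_lt_trans _ _ ((`|c| + 1) * `|x - y|)).
  by apply: ler_wpM2r => //; apply: le_trans (ler_norm c) _; rewrite lerDl.
rewrite mulrC -ltr_pdivlMr //; near: y.
by apply: cvgr_dist_lt => //; rewrite divr_gt0.
Unshelve. all: by end_near.
Qed.

Lemma mx_norm_entry_le m k (x : 'M[R]_(m, k)) i j : `|x i j| <= `|x|.
Proof.
rewrite [leRHS]/Num.norm /= mx_normrE.
exact: (@le_bigmax _ _ _ 0 (fun ij : 'I_m * 'I_k => `|x ij.1 ij.2|) (i, j)).
Qed.

Lemma continuous_trmx m k : continuous (@trmx R m k).
Proof.
apply: (@lipschitz_continuous _ _ _ 1) => x y; rewrite mul1r -linearB.
rewrite [leLHS]/Num.norm /= mx_normrE; apply: bigmax_le => // ij _.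
by rewrite mxE mx_norm_entry_le.
Qed.

Lemma continuous_sum_coord k (f : 'I_k -> R -> R) :
  (forall j, continuous (f j)) -> continuous (fun x : 'cV[R]_k => \sum_j f j (x j 0)).
Proof.
move=> fc; apply: continuous_big => [|j _]; first exact: add_continuous.
by move=> x; apply: continuous_comp; [exact: coord_continuous | exact: fc].
Qed.

Lemma cV_compact k (S : set 'cV[R]_k) (b : R) :
  closed S -> (forall x, S x -> forall i, `|x i 0| <= b) -> compact S.
Proof.
move=> cS bS; pose S' := [set v : 'rV[R]_k | S v^T].
have kS' : compact S'.
  apply: (subclosed_compact _ (@rV_compact _ k (fun=> `[(- b), b]%classic)
    (fun _ => @segment_compact R _ _))).
    by apply: (@preimage_closed _ _ (@trmx R 1 k)) => // v _; exact: continuous_trmx.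
  by move=> v /bS Sv i; have := Sv i; rewrite mxE /= in_itv /= -ler_norml.
have -> : S = trmx @` S'.
  by apply/seteqP; split => [x Sx|_ [v Sv <-] //]; exists x^T; rewrite /S' /= trmxK.
by apply: continuous_compact => //; apply: continuous_subspaceT => v; exact: continuous_trmx.
Qed.

End ContinuityLemmas.

Section Norms.
Variables (R : realType) (k : nat) (N : 'cV[R]_k -> R).
Hypothesis hN : is_norm N.

Lemma normvZ a x : N (a *: x) = `|a| * N x.
Proof. by case: hN. Qed.

Lemma normvD x y : N (x + y) <= N x + N y.
Proof. by case: hN. Qed.

Lemma normv0 : N 0 = 0.
Proof. by rewrite -(scale0r 0) normvZ normr0 mul0r. Qed.

Lemma normvN x : N (- x) = N x.
Proof. by rewrite -scaleN1r normvZ normrN1 mul1r. Qed.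

Lemma normv_distC x y : N (x - y) = N (y - x).
Proof. by rewrite -opprB normvN. Qed.

Lemma normv_ge0 x : 0 <= N x.
Proof. by have := normvD x (- x); rewrite subrr normv0 normvN; lra. Qed.

Lemma normv_gt0 x : x != 0 -> 0 < N x.
Proof.
move=> x0; rewrite lt_neqAle normv_ge0 andbT eq_sym.
by apply: contra x0; case: hN => N0 _ _ /eqP /N0 ->.
Qed.

Lemma normv_sum I (r : seq I) (P : pred I) (F : I -> 'cV[R]_k) :
  N (\sum_(i <- r | P i) F i) <= \sum_(i <- r | P i) N (F i).
Proof.
elim/big_rec2 : _ => [|i y1 y2 _ IH]; first by rewrite normv0.
by apply: le_trans (normvD _ _) _; rewrite lerD2l.
Qed.

Lemma normv_mulmx_le l (B : 'M[R]_(k, l)) x :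
  N (B *m x) <= \sum_j `|x j 0| * N (col j B).
Proof.
rewrite mulmx_sum_col; apply: le_trans (normv_sum _ _ _) _.
by apply: ler_sum => j _; rewrite normvZ.
Qed.

Lemma lerB_normv x y : N x - N y <= N (x - y).
Proof. by rewrite lerBlDr; apply: le_trans (normvD _ _); rewrite subrK. Qed.

Lemma continuous_normv_mulmx l (B : 'M[R]_(k, l)) : continuous (fun x => N (B *m x)).
Proof.
apply: (@lipschitz_continuous _ _ _ _ (\sum_j N (col j B))) => x y.
have NBle : N (B *m (x - y)) <= (\sum_j N (col j B)) * `|x - y|.
  apply: le_trans (normv_mulmx_le _ _) _; rewrite mulr_suml.
  apply: ler_sum => j _; rewrite mulrC ler_wpM2l ?normv_ge0 //.
  by have := mx_norm_entry_le (x - y) j 0; rewrite mxE.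
have h1 := lerB_normv (B *m x) (B *m y).
have h2 := lerB_normv (B *m y) (B *m x).
rewrite -mulmxBr in h1; rewrite -mulmxBr -[y - x]opprB mulmxN normvN in h2.
by rewrite /= ler_norml; apply/andP; split; lra.
Qed.

Lemma normv_le_l1 x : N x <= \sum_j `|x j 0| * N (delta_mx j 0).
Proof.
have := normv_mulmx_le 1%:M x; rewrite mul1mx.
by under eq_bigr do rewrite colE mul1mx.
Qed.

Lemma continuous_normv : continuous N.
Proof.
have -> : N = (fun x => N (1%:M *m x)) by apply: funext => x; rewrite mul1mx.
exact: continuous_normv_mulmx.
Qed.

End Norms.

Section Simplex.
Variables (R : realType) (k : nat).

Definition vsum (x : 'cV[R]_k) : R := \sum_i x i 0.

Lemma vsumD x y : vsum (x + y) = vsum x + vsum y.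
Proof. by rewrite /vsum -big_split; apply: eq_bigr => i _; rewrite mxE. Qed.

Lemma vsumZ a x : vsum (a *: x) = a * vsum x.
Proof. by rewrite /vsum mulr_sumr; apply: eq_bigr => i _; rewrite mxE. Qed.

Lemma vsumN x : vsum (- x) = - vsum x.
Proof. by rewrite -scaleN1r vsumZ mulN1r. Qed.

Lemma vsumB x y : vsum (x - y) = vsum x - vsum y.
Proof. by rewrite vsumD vsumN. Qed.

Lemma vsum_delta i : vsum (delta_mx i 0) = 1.
Proof.
rewrite /vsum (bigD1 i) //= big1 => [|j /negbTE ji]; first by rewrite mxE !eqxx addr0.
by rewrite mxE ji.
Qed.

Lemma vsum_simplexB (x y : 'cV[R]_k) : simplex k x -> simplex k y -> vsum (x - y) = 0.
Proof. by move=> [_ x1] [_ y1]; rewrite vsumB /vsum x1 y1 subrr. Qed.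

Lemma simplex_delta i : simplex k (delta_mx i 0 : 'cV[R]_k).
Proof. by split; [move=> j; rewrite mxE ler0n | exact: vsum_delta]. Qed.

Definition normalize (w : 'cV[R]_k) := (vsum w)^-1 *: w.

Lemma simplex_normalize (w : 'cV[R]_k) : (forall i, 0 <= w i 0) -> 0 < vsum w ->
  simplex k (normalize w).
Proof.
move=> w_ge0 w_gt0; split; first by move=> i; rewrite mxE mulr_ge0 ?invr_ge0 ?w_ge0 ?ltW.
by change (vsum (normalize w) = 1); rewrite vsumZ mulVf ?gt_eqF.
Qed.

Lemma simplex_comb a b c (x y z : 'cV[R]_k) : simplex k x -> simplex k y -> simplex k z ->
  0 <= a -> 0 <= b -> 0 <= c -> a + b + c = 1 -> simplex k (a *: x + b *: y + c *: z).
Proof.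
move=> [x0 x1] [y0 y1] [z0 z1] a0 b0 c0 abc; split.
  by move=> i; rewrite !mxE !addr_ge0 ?mulr_ge0.
change (vsum (a *: x + b *: y + c *: z) = 1).
by rewrite !vsumD !vsumZ /vsum x1 y1 z1 !mulr1.
Qed.

Lemma simplex_closed : closed (simplex k : set 'cV[R]_k).
Proof.
have -> : simplex k = \bigcap_i [set x : 'cV[R]_k | 0 <= x i 0] `&` vsum @^-1` [set 1].
  by apply/seteqP; split => x [x0 x1]; split => // i; [move=> _|]; apply: x0.
apply: closedI; first apply: closed_bigI => i _.
  apply: (@preimage_closed _ _ (fun x : 'cV[R]_k => x i 0) [set r | 0 <= r]).
    by move=> x _; exact: coord_continuous.
  exact: closed_ge.
apply: preimage_closed; last exact: closed_eq.
by move=> x _; apply: (@continuous_sum_coord _ _ (fun _ r => r)) => j r; exact: cvg_id.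
Qed.

End Simplex.
Arguments vsum {R k}.

Lemma inf_ge0 (R : realType) (S : set R) : (forall y, S y -> 0 <= y) -> 0 <= inf S.
Proof.
move=> S_ge0; have [[y Sy]|/set0P/negP/negPn/eqP->] := pselect (S !=set0).
  by apply: lb_le_inf => //; exists y.
by rewrite inf0.
Qed.

Section Fibres.
Variables (R : realType) (m n : nat) (Nn : 'cV[R]_n -> R) (A : 'M[R]_(m, n)).
Hypothesis hNn : is_norm Nn.

Lemma Zset_nonempty u : convA A u -> Zset A u !=set0.
Proof. by case=> z z_simplex <-; exists z. Qed.

Lemma dist_Zset_ge0 x u : 0 <= dist_pt Nn x (Zset A u).
Proof. by apply: inf_ge0 => _ [z _ <-]; exact: normv_ge0. Qed.

Lemma dist_Zset_le x u z : Zset A u z -> dist_pt Nn x (Zset A u) <= Nn (x - z).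
Proof.
move=> Zz; apply: ge_inf; last by exists z.
by exists 0 => _ [y _ <-]; exact: normv_ge0.
Qed.

Lemma Zset_compact u : compact (Zset A u).
Proof.
apply: (@cV_compact _ _ _ 1); last first.
  move=> z [[z_ge0 z1] _] i; rewrite ger0_norm // -z1.
  by rewrite (bigD1 i) //= lerDl sumr_ge0.
have -> : Zset A u = simplex n `&` \bigcap_i [set z | (A *m z) i 0 = u i 0].
  apply/seteqP; split=> z [z_simplex Az]; split=> //; first by move=> i _ /=; rewrite Az.
  by apply/colP => i; exact: Az.
apply: closedI; first exact: simplex_closed.
apply: closed_bigI => i _.
apply: (@preimage_closed _ _ (fun z : 'cV[R]_n => (A *m z) i 0) [set u i 0]); last first.
  exact: closed_eq.
move=> z _; under [X in continuous_at z X]funext do rewrite mxE.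
by apply: (@continuous_sum_coord _ _ (fun j r => A i j * r)) => j; exact: mulrl_continuous.
Qed.

End Fibres.

Section Gain.
Variables (R : realType) (m n : nat) (Nn : 'cV[R]_n -> R) (Nm : 'cV[R]_m -> R).
Hypotheses (hNn : is_norm Nn) (hNm : is_norm Nm).
Variable A : 'M[R]_(m, n).

Definition gain (w : 'cV[R]_n) := Nm (A *m w) / Nn w.

Lemma gainZ a w : a != 0 -> gain (a *: w) = gain w.
Proof.
move=> a0; rewrite /gain -scalemxAr normvZ // normvZ // invfM mulrACA.
by rewrite divff ?mul1r // normr_eq0.
Qed.

Lemma continuous_gain_at w : w != 0 -> {for w, continuous gain}.
Proof.
move=> w0; apply: cvgM; [exact: nbhs_filter | exact: continuous_normv_mulmx |].
apply: cvgV; [exact: nbhs_filter | by rewrite gt_eqF ?normv_gt0 |].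
exact: continuous_normv.
Qed.

Hypothesis hA : exists i j : 'I_n, col i A != col j A.

Lemma exists_vsum0_mulmx_neq0 : exists2 w, vsum w = 0 & A *m w != 0.
Proof.
have [i [j Aij]] := hA; exists (delta_mx i 0 - delta_mx j 0).
  by rewrite vsumB !vsum_delta subrr.
by rewrite mulmxBr -!colE subr_eq0.
Qed.

Lemma exists_max_gain : exists w, [/\ vsum w = 0, `|w| = 1 &
  forall v, vsum v = 0 -> v != 0 -> gain v <= gain w].
Proof.
pose K := [set w : 'cV[R]_n | vsum w = 0 /\ `|w| = 1].
have normK w : K w -> w != 0 by move=> [_ w1]; rewrite -normr_eq0 w1 oner_neq0.
have K0 : K !=set0.
  have [w w_bal Aw] := exists_vsum0_mulmx_neq0.
  have w0 : w != 0 by apply: contraNneq Aw => ->; rewrite mulmx0.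
  by exists (`|w|^-1 *: w); split; [rewrite vsumZ w_bal mulr0 | exact: normfZV].
have K_compact : compact K.
  apply: (@cV_compact _ _ _ 1); last by move=> w [_ <-] i; exact: mx_norm_entry_le.
  have -> : K = vsum @^-1` [set 0] `&` Num.norm @^-1` [set 1] by [].
  apply: closedI; apply: preimage_closed; try exact: closed_eq.
    by move=> w _; apply: (@continuous_sum_coord _ _ (fun _ r => r)) => j r; exact: cvg_id.
  by move=> w _; exact: norm_continuous.
have gain_cont : {within K, continuous gain}.
  by apply: continuous_in_subspaceT => w /set_mem /normK; exact: continuous_gain_at.
have [w /set_mem Kw w_max] := compact_EVT_max K0 K_compact gain_cont.
exists w; split; [by case: Kw | by case: Kw |] => v v0 vn0.
rewrite -(@gainZ `|v|^-1 v) ?invr_eq0 ?normr_eq0 //.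
by apply/w_max/mem_set; split; [rewrite vsumZ v0 mulr0 | exact: normfZV].
Qed.

Variable ws : 'cV[R]_n.
Hypotheses (ws_bal : vsum ws = 0) (ws_unit : `|ws| = 1)
  (ws_max : forall v, vsum v = 0 -> v != 0 -> gain v <= gain ws).

Lemma gain_max_gt0 : 0 < gain ws.
Proof.
have [w w_bal Aw] := exists_vsum0_mulmx_neq0.
have w0 : w != 0 by apply: contraNneq Aw => ->; rewrite mulmx0.
by apply: lt_le_trans (ws_max w_bal w0); rewrite divr_gt0 ?normv_gt0.
Qed.

Lemma gain_max_bound w : vsum w = 0 -> Nm (A *m w) <= gain ws * Nn w.
Proof.
move=> w_bal; have [->|w0] := eqVneq w 0; first by rewrite mulmx0 !normv0 ?mulr0.
by rewrite -ler_pdivrMr ?normv_gt0 //; exact: ws_max.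
Qed.

Lemma residual_le_dist u x : convA A u -> simplex n x ->
  Nm (A *m x - u) <= gain ws * dist_pt Nn x (Zset A u).
Proof.
move=> u_conv [_ x1]; rewrite mulrC -ler_pdivrMr ?gain_max_gt0 //.
have [z Zz] := Zset_nonempty u_conv.
apply: lb_le_inf; first by exists (Nn (x - z)), z.
move=> _ [y [[_ y1] <-] <-]; rewrite ler_pdivrMr ?gain_max_gt0 // mulrC -mulmxBr.
by apply: gain_max_bound; rewrite vsumB /vsum x1 y1 subrr.
Qed.

Lemma dist_Zset_gt0 u x : convA A u -> simplex n x -> ~ Zset A u x ->
  0 < dist_pt Nn x (Zset A u).
Proof.
move=> u_conv x_simplex xZ.
have Axu : 0 < Nm (A *m x - u).
  by rewrite normv_gt0 // subr_eq0; apply/eqP => Ax; apply: xZ.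
rewrite lt_neqAle dist_Zset_ge0 // andbT; apply/eqP => dist0.
by have := residual_le_dist u_conv x_simplex; rewrite -dist0 mulr0 leNgt Axu.
Qed.

Lemma is_max_gain : is_max [set Nm (A *m w) / Nn w |
  w in [set w : 'cV[R]_n | w != 0 /\ \sum_i w i 0 = 0]] (gain ws).
Proof.
split; last by move=> _ [w [w0 w_bal] <-]; exact: ws_max.
by exists ws => //; split => //; rewrite -normr_eq0 ws_unit oner_neq0.
Qed.

Lemma residual_ratio_le u x : convA A u -> simplex n x -> ~ Zset A u x ->
  Nm (A *m x - u) / dist_pt Nn x (Zset A u) <= gain ws.
Proof.
move=> u_conv x_simplex xZ.
by rewrite ler_pdivrMr ?dist_Zset_gt0 ?residual_le_dist.
Qed.

Lemma residual_ratio_attained : exists u x, [/\ convA A u, simplex n x, ~ Zset A u x &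
  Nm (A *m x - u) / dist_pt Nn x (Zset A u) = gain ws].
Proof.
pose one : 'cV[R]_n := const_mx 1; pose t := (vsum one)^-1.
have one_gt0 : 0 < vsum one.
  have [i _] := hA; rewrite /vsum (bigD1 i) //= mxE ltr_pwDl //.
  by rewrite sumr_ge0 // => j _; rewrite mxE.
have t_gt0 : 0 < t by rewrite invr_gt0.
have c_simplex : simplex n (t *: one).
  by apply: simplex_normalize => // i; rewrite mxE.
have x_simplex : simplex n (t *: (one + ws)).
  rewrite /t -[vsum one]addr0 -ws_bal -vsumD; apply: simplex_normalize.
    move=> i; rewrite !mxE -lerBlDl sub0r.
    by have := mx_norm_entry_le ws i 0; rewrite ws_unit ler_norml => /andP[].
  by rewrite vsumD ws_bal addr0.
have xc : t *: (one + ws) - t *: one = t *: ws by rewrite scalerDr addrC addKr.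
have Axu : A *m (t *: (one + ws)) - A *m (t *: one) = t *: (A *m ws).
  by rewrite -mulmxBr xc scalemxAr.
have ws0 : ws != 0 by rewrite -normr_eq0 ws_unit oner_neq0.
have Aws : Nm (A *m ws) = gain ws * Nn ws by rewrite /gain divfK // gt_eqF ?normv_gt0.
have xZ : ~ Zset A (A *m (t *: one)) (t *: (one + ws)).
  case=> _ /eqP; rewrite -subr_eq0 Axu scaler_eq0 (gt_eqF t_gt0) /= => /eqP Aws0.
  by have := gain_max_gt0; rewrite /gain Aws0 normv0 // mul0r ltxx.
have u_conv : convA A (A *m (t *: one)) by exists (t *: one).
exists (A *m (t *: one)), (t *: (one + ws)); split => //.
apply/le_anti/andP; split; first exact: residual_ratio_le.
rewrite ler_pdivlMr ?dist_Zset_gt0 //.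
have c_Z : Zset A (A *m (t *: one)) (t *: one) by [].
apply: le_trans (ler_wpM2l (ltW gain_max_gt0) (dist_Zset_le hNn _ c_Z)) _.
by rewrite xc Axu !normvZ // gtr0_norm // Aws mulrCA.
Qed.

Lemma is_max_residual_ratio : is_max [set Nm (A *m p.2 - p.1) / dist_pt Nn p.2 (Zset A p.1) |
  p in [set p : 'cV[R]_m * 'cV[R]_n |
         convA A p.1 /\ simplex n p.2 /\ ~ Zset A p.1 p.2]] (gain ws).
Proof.
split; last by move=> _ [[u x] [u_conv [x_simplex xZ]] <-]; exact: residual_ratio_le.
by have [u [x [u_conv x_simplex xZ ratio]]] := residual_ratio_attained; exists (u, x).
Qed.

End Gain.

Section MinimalFace.
Variables (R : realType) (m n : nat) (A : 'M[R]_(m, n)).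

Lemma convA_comb a b c y1 y2 y3 : convA A y1 -> convA A y2 -> convA A y3 ->
  0 <= a -> 0 <= b -> 0 <= c -> a + b + c = 1 -> convA A (a *: y1 + b *: y2 + c *: y3).
Proof.
move=> [x1 x1_simplex <-] [x2 x2_simplex <-] [x3 x3_simplex <-] a0 b0 c0 abc.
exists (a *: x1 + b *: x2 + c *: x3); first exact: simplex_comb.
by rewrite !mulmxDr !scalemxAr.
Qed.

(* The points [y] of conv(A) such that [v] lies in the relative interior of a
   segment of conv(A) issued from [y]: the smallest face of conv(A) containing [v]. *)
Definition minimal_face (v : 'cV[R]_m) : set 'cV[R]_m :=
  [set y | convA A y /\ exists2 e, 0 < e & convA A (v + e *: (v - y))].

Lemma minimal_face_self v : convA A v -> minimal_face v v.
Proof. by move=> v_conv; split => //; exists 1 => //; rewrite subrr scaler0 addr0. Qed.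

Lemma minimal_face_extremal v y z t : convA A v -> convA A y -> convA A z -> 0 < t < 1 ->
  minimal_face v (t *: y + (1 - t) *: z) -> minimal_face v y.
Proof.
move=> v_conv y_conv z_conv /andP[t0 t1] [_ [e e0 ve_conv]]; split => //.
have e1_gt0 : 0 < 1 + e by rewrite addr_gt0.
exists (t * e / (1 + e)); first by rewrite divr_gt0 ?mulr_gt0.
have := convA_comb (a := 1 / (1 + e)) (b := e * (1 - t) / (1 + e)) (c := t * e / (1 + e))
  ve_conv z_conv v_conv.
have -> : 1 / (1 + e) *: (v + e *: (v - (t *: y + (1 - t) *: z))) +
   e * (1 - t) / (1 + e) *: z + t * e / (1 + e) *: v = v + t * e / (1 + e) *: (v - y).
  by apply/matrixP => i j; rewrite !mxE; field; rewrite gt_eqF.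
apply; rewrite ?divr_ge0 ?mulr_ge0 ?subr_ge0 ?ltW //.
by field; rewrite gt_eqF.
Qed.

Lemma minimal_face_is_face v : convA A v -> is_face (convA A) (minimal_face v).
Proof.
move=> v_conv; split; first by move=> y [].
- move=> y z t [y_conv [e1 e1_gt0 y_ext]] [z_conv [e2 e2_gt0 z_ext]] /andP[t0 t1].
  have [t1' e1_ge0 e2_ge0] : [/\ 0 <= 1 - t, 0 <= e1 & 0 <= e2].
    by split; rewrite ?subr_ge0 // ltW.
  split.
    have := convA_comb (a := t) (b := 1 - t) (c := 0) y_conv z_conv y_conv.
    by rewrite scale0r !addr0; apply => //; rewrite addrC subrK.
  have e12_gt0 : 0 < e1 + e2 by rewrite addr_gt0.
  exists (e1 * e2 / (e1 + e2)); first by rewrite divr_gt0 ?mulr_gt0.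
  have := convA_comb (a := t * e2 / (e1 + e2)) (b := (1 - t) * e1 / (e1 + e2))
    (c := (t * e1 + (1 - t) * e2) / (e1 + e2)) y_ext z_ext v_conv.
  have -> : t * e2 / (e1 + e2) *: (v + e1 *: (v - y)) +
      (1 - t) * e1 / (e1 + e2) *: (v + e2 *: (v - z)) +
      (t * e1 + (1 - t) * e2) / (e1 + e2) *: v =
      v + e1 * e2 / (e1 + e2) *: (v - (t *: y + (1 - t) *: z)).
    by apply/matrixP => i j; rewrite !mxE; field; rewrite gt_eqF.
  apply; rewrite ?divr_ge0 ?addr_ge0 ?mulr_ge0 //.
  by field; rewrite gt_eqF.
- move=> y z t y_conv z_conv /andP[t0 t1] yz_face; split.
    by apply: minimal_face_extremal yz_face; rewrite ?t0.
  apply: (@minimal_face_extremal v z y (1 - t)) => //.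
    by rewrite subr_gt0 t1 ltrBlDr ltrDl.
  by rewrite (_ : 1 - (1 - t) = t) 1?addrC //; ring.
Qed.

End MinimalFace.

Lemma facial_distance_le (R : realType) m n (Nm : 'cV[R]_m -> R) (A : 'M[R]_(m, n))
    F v p : is_norm Nm -> is_face (convA A) F -> F v -> F <> convA A -> simplex n p ->
  (forall i, F (col i A) -> p i 0 = 0) -> facial_distance Nm A <= Nm (A *m p - v).
Proof.
move=> hNm F_face Fv F_proper p_simplex p_out.
apply: (@le_trans _ _ (dist_set Nm F (conv_outside A F))).
  apply: ge_inf; last by exists F => //; split => //; split => //; exists v.
  exists 0 => _ [G _ <-]; apply: inf_ge0 => _ [a _ [b _ <-]]; exact: normv_ge0.
rewrite normv_distC //; apply: ge_inf; last by exists v => //; exists (A *m p) => //; exists p.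
by exists 0 => _ [a _ [b _ <-]]; exact: normv_ge0.
Qed.

Section PosNegParts.
Variables (R : realType) (k : nat).

Definition pos_part (d : 'cV[R]_k) := map_mx (fun a => Num.max a 0) d.
Definition neg_part (d : 'cV[R]_k) := map_mx (fun a => Num.max (- a) 0) d.
Definition l1norm (d : 'cV[R]_k) := \sum_i `|d i 0|.

Lemma pos_part_ge0 d i : 0 <= pos_part d i 0.
Proof. by rewrite mxE le_max lexx orbT. Qed.

Lemma neg_part_ge0 d i : 0 <= neg_part d i 0.
Proof. by rewrite mxE le_max lexx orbT. Qed.

Lemma pos_part_ge (d : 'cV[R]_k) i : d i 0 <= pos_part d i 0.
Proof. by rewrite mxE le_max lexx. Qed.

Lemma pos_part_gt0 d i : (0 < pos_part d i 0) = (0 < d i 0).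
Proof. by rewrite mxE lt_max ltxx orbF. Qed.

Lemma max0_cases (a : R) :
  (0 <= a /\ Num.max a 0 = a /\ Num.max (- a) 0 = 0) \/
  (a < 0 /\ Num.max a 0 = 0 /\ Num.max (- a) 0 = - a).
Proof.
case: (lerP 0 a) => a0; [left | right]; do 2 split => //.
  by rewrite max_r // oppr_le0.
by rewrite max_l // oppr_ge0 ltW.
Qed.

Lemma pos_partB_neg_part d : pos_part d - neg_part d = d.
Proof.
apply/matrixP => i j; rewrite !mxE.
by case: (max0_cases (d i j)) => [[_ [-> ->]]|[_ [-> ->]]]; rewrite ?subr0 ?sub0r ?opprK.
Qed.

Lemma l1norm_pos_neg d : l1norm d = vsum (pos_part d) + vsum (neg_part d).
Proof.
rewrite /l1norm /vsum -big_split; apply: eq_bigr => i _; rewrite !mxE.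
case: (max0_cases (d i 0)) => [[d0 [-> ->]]|[d0 [-> ->]]].
  by rewrite /= addr0 ger0_norm.
by rewrite /= add0r ltr0_norm.
Qed.

Lemma norm_shift_le (a t y f : R) : 0 <= y ->
  0 <= t <= Num.max (- a) 0 -> 0 <= f <= Num.max a 0 ->
  `|a + t - y - f| <= `|a| - t - f + y.
Proof.
move=> y0 /andP[t0 ta] /andP[f0 fa].
case: (max0_cases a) => [[a0 [ap an]]|[a0 [ap an]]]; rewrite ap an in ta fa.
  by rewrite (ger0_norm a0) ler_norml; apply/andP; split; lra.
by rewrite (ltr0_norm a0) ler_norml; apply/andP; split; lra.
Qed.

Lemma l1norm_shift_le (d t y f : 'cV[R]_k) : (forall i, 0 <= y i 0) ->
  (forall i, 0 <= t i 0 <= neg_part d i 0) -> (forall i, 0 <= f i 0 <= pos_part d i 0) ->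
  l1norm (d + t - y - f) <= l1norm d - vsum t - vsum f + vsum y.
Proof.
move=> y_ge0 t_le f_le; rewrite /l1norm /vsum -!sumrB -big_split /=.
apply: ler_sum => i _; have := f_le i; have := t_le i; rewrite !mxE => ti fi.
exact: norm_shift_le.
Qed.

Lemma vsum_neg_part (d : 'cV[R]_k) :
  vsum d = 0 -> vsum (neg_part d) = vsum (pos_part d).
Proof.
by move=> d_bal; apply/eqP; rewrite eq_sym -subr_eq0 -vsumB pos_partB_neg_part d_bal.
Qed.

Lemma vsum_pos_part_gt0 (d : 'cV[R]_k) j :
  0 < d j 0 -> 0 < vsum (pos_part d).
Proof.
move=> dj; rewrite /vsum (bigD1 j) //= ltr_pwDl ?pos_part_gt0 //.
by rewrite sumr_ge0 // => i _; exact: pos_part_ge0.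
Qed.

Lemma exists_pos_entry (d : 'cV[R]_k) :
  vsum d = 0 -> d != 0 -> exists j, 0 < d j 0.
Proof.
move=> d_bal d0; apply/not_existsP => d_le0; move/negP: d0; apply.
have Nd_ge0 i : 0 <= - d i 0 by rewrite oppr_ge0 leNgt; apply/negP/d_le0.
have /psumr_eq0P Nd0 : \sum_i - d i 0 = 0 by rewrite sumrN [X in - X]d_bal oppr0.
by apply/eqP/colP => i; rewrite mxE -[d i 0]opprK Nd0 ?oppr0.
Qed.

Lemma pos_neg_decomposition (d : 'cV[R]_k) : vsum d = 0 ->
  0 < vsum (pos_part d) ->
  vsum (pos_part d) *: (normalize (pos_part d) - normalize (neg_part d)) = d.
Proof.
move=> d_bal s_gt0; rewrite /normalize vsum_neg_part // scalerBr !scalerA.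
by rewrite mulfV ?gt_eqF // !scale1r pos_partB_neg_part.
Qed.

Lemma normv_le_l1norm (N : 'cV[R]_k -> R) x : is_norm N ->
  N x <= \big[Num.max/0]_(i < k) N (delta_mx i 0) * l1norm x.
Proof.
move=> hN; apply: le_trans (normv_le_l1 hN x) _; rewrite mulr_sumr.
apply: ler_sum => i _; rewrite mulrC ler_wpM2r //.
exact: (@le_bigmax _ _ _ 0 (fun i => N (delta_mx i 0))).
Qed.

End PosNegParts.

Lemma exists_l1_closest (R : realType) m n (A : 'M[R]_(m, n)) u x : convA A u ->
  exists2 z, Zset A u z & forall z', Zset A u z' -> l1norm (x - z) <= l1norm (x - z').
Proof.
move=> u_conv.
have l1_cont : continuous (fun z : 'cV[R]_n => l1norm (x - z)).
  have -> : (fun z => l1norm (x - z)) = (fun z : 'cV[R]_n => \sum_j `|x j 0 - z j 0|).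
    by apply: funext => z; apply: eq_bigr => j _; rewrite !mxE.
  apply: (@continuous_sum_coord _ _ (fun j r => `|x j 0 - r|)) => j r.
  apply: (@continuous_comp _ _ _ (fun r => x j 0 - r) Num.norm); last exact: norm_continuous.
  exact: cvgB (cvg_cst _) cvg_id.
have [z /set_mem Zz z_min] := compact_EVT_min (Zset_nonempty u_conv) (@Zset_compact _ _ _ A u)
  (continuous_subspaceT l1_cont).
by exists z => // z' /mem_set; exact: z_min.
Qed.

Section L1Closest.
Variables (R : realType) (m n : nat) (A : 'M[R]_(m, n)) (u : 'cV[R]_m) (x z : 'cV[R]_n).
Hypotheses (x_simplex : simplex n x) (Zz : Zset A u z)
  (z_closest : forall z', Zset A u z' -> l1norm (x - z) <= l1norm (x - z')).

Lemma l1_closest_avoids_face j : 0 < (x - z) j 0 ->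
  ~ minimal_face A (A *m normalize (neg_part (x - z))) (col j A).
Proof.
move=> dj; set d := x - z in dj *; set s := vsum (neg_part d).
have [[x_ge0 _] [[z_ge0 z1] Az]] := (x_simplex, Zz).
have d_bal : vsum d = 0 by apply: vsum_simplexB; case: Zz.
have s_gt0 : 0 < s by rewrite /s vsum_neg_part //; exact: vsum_pos_part_gt0 dj.
set q := normalize (neg_part d).
have [q_ge0 q1] : simplex n q by apply: simplex_normalize => // i; exact: neg_part_ge0.
have q_neg i : s * q i 0 = neg_part d i 0 by rewrite mxE mulrA mulfV ?gt_eqF ?mul1r.
clearbody q; case=> _ [e e_gt0 [y [y_ge0 y1] Ay]].
pose r := Num.min (s / (1 + e)) (d j 0 / e).
have r_gt0 : 0 < r by rewrite lt_min !divr_gt0 // addr_gt0.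
have r_s : r * (1 + e) <= s by rewrite -ler_pdivlMr ?addr_gt0 // ge_min lexx.
have r_d : r * e <= d j 0 by rewrite -ler_pdivlMr // ge_min lexx orbT.
pose t := (r * (1 + e)) *: q; pose f := (r * e) *: (delta_mx j 0 : 'cV[R]_n).
have t_le i : 0 <= t i 0 <= neg_part d i 0.
  rewrite -q_neg mxE mulr_ge0 ?mulr_ge0 ?q_ge0 ?addr_ge0 ?(ltW r_gt0) ?(ltW e_gt0) //=.
  by rewrite ler_wpM2r ?q_ge0.
have f_le i : 0 <= f i 0 <= pos_part d i 0.
  rewrite [f i 0]mxE [delta_mx _ _ i 0]mxE eqxx andbT.
  case: (eqVneq i j) => [->|_]; last by rewrite mulr0 lexx pos_part_ge0.
  by rewrite mulr1 mulr_ge0 ?(ltW r_gt0) ?(ltW e_gt0) //= (le_trans r_d) ?pos_part_ge.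
(* [Ay] makes the exchange of the mass [t] of [z] for [r y + f] invisible to
   [A]; it brings [z] closer to [x] by at least [2 r e] in l1 norm. *)
pose z' := z - t + r *: y + f.
have Zz' : Zset A u z'.
  split; [split|].
  - move=> i; have /andP[_ ti] := t_le i; have /andP[fi _] := f_le i.
    have ry : 0 <= r * y i 0 by rewrite mulr_ge0 // ltW.
    have nz : neg_part d i 0 <= z i 0.
      by rewrite mxE ge_max z_ge0 andbT !mxE opprB lerBlDr lerDl.
    have -> : z' i 0 = z i 0 - t i 0 + r * y i 0 + f i 0 by rewrite !mxE.
    lra.
  - change (vsum z' = 1).
    by rewrite !vsumD vsumN !vsumZ vsum_delta /vsum z1 y1 q1; ring.
  - rewrite !mulmxDr mulmxN -!scalemxAr Ay Az -colE.
    by apply/matrixP => i k; rewrite !mxE; ring.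
have := z_closest Zz'; apply/negP; rewrite -ltNge -/d.
have -> : x - z' = d + t - r *: y - f by rewrite /z' /d !opprD !opprK !addrA.
apply: le_lt_trans (l1norm_shift_le _ t_le f_le) _ => [i|].
  by rewrite mxE mulr_ge0 // ltW.
rewrite !vsumZ vsum_delta /vsum q1 y1; have : 0 < r * e by rewrite mulr_gt0.
lra.
Qed.

Lemma facial_distance_le_l1_closest (Nm : 'cV[R]_m -> R) : is_norm Nm -> x - z != 0 ->
  facial_distance Nm A <=
    Nm (A *m normalize (pos_part (x - z)) - A *m normalize (neg_part (x - z))).
Proof.
move=> hNm d0; set d := x - z in d0 *.
have d_bal : vsum d = 0 by apply: vsum_simplexB; case: Zz.
have [j dj] := exists_pos_entry d_bal d0.
have s_gt0 := vsum_pos_part_gt0 dj.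
have v_conv : convA A (A *m normalize (neg_part d)).
  exists (normalize (neg_part d)) => //; apply: simplex_normalize => [i|].
    exact: neg_part_ge0.
  by rewrite vsum_neg_part.
apply: (facial_distance_le hNm (minimal_face_is_face v_conv) (minimal_face_self v_conv)).
- move=> face_full; apply: (l1_closest_avoids_face dj); rewrite face_full.
  by exists (delta_mx j 0); [exact: simplex_delta | rewrite colE].
- by apply: simplex_normalize => // i; exact: pos_part_ge0.
- move=> i face_i; rewrite mxE; apply/eqP; rewrite mulf_eq0; apply/orP; right.
  case: (ltrP 0 (d i 0)) => [di | di]; first by case: (l1_closest_avoids_face di face_i).
  by rewrite mxE max_r.
Qed.

End L1Closest.

Lemma facial_distance_le_residual_ratio (R : realType) m n (Nn : 'cV[R]_n -> R)
    (Nm : 'cV[R]_m -> R) (A : 'M[R]_(m, n)) u x :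
  is_norm Nn -> is_norm Nm -> (exists i j : 'I_n, col i A != col j A) ->
  convA A u -> simplex n x -> ~ Zset A u x ->
  facial_distance Nm A / \big[Num.max/0]_(i < n) Nn (delta_mx i 0)
    <= 2 * Nm (A *m x - u) / dist_pt Nn x (Zset A u).
Proof.
move=> hNn hNm hA u_conv x_simplex xZ.
have [ws [_ _ ws_max]] := exists_max_gain hNn hNm hA.
have dist_gt0 := dist_Zset_gt0 hNn hNm hA ws_max u_conv x_simplex xZ.
have [z Zz z_closest] := exists_l1_closest x u_conv.
have Ad : A *m (x - z) = A *m x - u by rewrite mulmxBr; case: Zz => _ ->.
have d0 : x - z != 0.
  by apply/eqP => d0; apply: xZ; split => //; apply/eqP; rewrite -subr_eq0 -Ad d0 mulmx0.
have d_bal : vsum (x - z) = 0 by apply: vsum_simplexB; case: Zz.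
have [j dj] := exists_pos_entry d_bal d0.
have s_gt0 := vsum_pos_part_gt0 dj; set s := vsum (pos_part (x - z)) in s_gt0.
set E := \big[Num.max/0]_(i < n) Nn (delta_mx i 0).
have E_gt0 : 0 < E.
  apply: lt_le_trans (@le_bigmax _ _ _ 0 (fun i => Nn (delta_mx i 0)) j).
  apply: normv_gt0 => //; apply/eqP => /colP /(_ j).
  by rewrite !mxE !eqxx => /eqP; rewrite oner_eq0.
have dist_le : dist_pt Nn x (Zset A u) <= E * (2 * s).
  apply: le_trans (dist_Zset_le hNn _ Zz) _; apply: le_trans (normv_le_l1norm _ hNn) _.
  by rewrite l1norm_pos_neg vsum_neg_part // mulr_natl mulr2n.
rewrite -Ad -(pos_neg_decomposition d_bal s_gt0) -scalemxAr normvZ // gtr0_norm //.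
rewrite mulmxBr; have := facial_distance_le_l1_closest x_simplex Zz z_closest hNm d0.
set Phi := facial_distance _ _; set N := Nm _ => Phi_le.
have N_ge0 : 0 <= N by exact: normv_ge0.
rewrite ler_pdivrMr // mulrAC ler_pdivlMr // -/s; nra.
Qed.

Unset Implicit Arguments.

Theorem proposition2 (R : realType) (m n : nat)
  (Nn : 'cV[R]_n -> R) (Nm : 'cV[R]_m -> R)
  (hNn : is_norm Nn) (hNm : is_norm Nm)
  (A : 'M[R]_(m, n))
  (hA : exists i j : 'I_n, col i A != col j A) :
  (exists M : R,
     is_max [set Nm (A *m w) / Nn w |
              w in [set w : 'cV[R]_n | w != 0 /\ \sum_i w i 0 = 0]] M /\
     is_max [set Nm (A *m p.2 - p.1) / dist_pt Nn p.2 (Zset A p.1) |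
              p in [set p : 'cV[R]_m * 'cV[R]_n |
                     convA A p.1 /\ simplex n p.2 /\ ~ Zset A p.1 p.2]] M) /\
  (forall (u : 'cV[R]_m) (x : 'cV[R]_n),
     convA A u -> simplex n x -> ~ Zset A u x ->
     facial_distance Nm A / \big[Num.max/0]_(i < n) Nn (delta_mx i 0)
       <= 2 * Nm (A *m x - u) / dist_pt Nn x (Zset A u)).
Proof.
split; last by move=> u x; exact: facial_distance_le_residual_ratio.
have [ws [ws_bal ws_unit ws_max]] := exists_max_gain hNn hNm hA.
exists (gain Nn Nm A ws); split; first exact: is_max_gain.
exact: is_max_residual_ratio.
Qed.
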